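(* Let $\mathcal U$ be a finite set, $P$ a probability distribution on $\mathcal U$ with $P(u)>0$ for all $u$, and $d\ge2$ an integer. Let $l:\mathcal U\to\mathbb{N}$ be the codeword lengths of a uniquely decodable $d$-ary code satisfying $$l(u)\ \ge\ \left\lceil \log_d\frac{1}{P(u)}\right\rceil\quad\text{for all }u\in\mathcal U.$$ With $c_{d,l}=\sum_u d^{-l(u)}$, $Q_{d,l}(u)=d^{-l(u)}/c_{d,l}$, and average redundancy $\Delta_d=\sum_u P(u)l(u)+\sum_u P(u)\log_d P(u)$, we have $$J(P,Q_{d,l})\le\frac{\Delta_d\log d}{2}\qquad\text{and}\qquad \sum_{u\in\mathcal U}\big|P(u)-Q_{d,l}(u)\big|\ \le\ 2\,\varepsilon\!\left(\frac{\Delta_d\log d}{2}\right),$$ where for $x\ge0$, $\varepsilon(x)$ denotes the unique $\varepsilon\in[0,1)$ solving $\varepsilon\log\frac{1+\varepsilon}{1-\varepsilon}=x$.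
   Context: Jeffreys' divergence is $J(P,Q)=\frac{D(P\|Q)+D(Q\|P)}{2}$ with $D(P\|Q)=\sum_x P(x)\log\frac{P(x)}{Q(x)}$; $\log$ denotes the natural logarithm and $\log_d$ the base-$d$ logarithm. *)

From Stdlib Require Import Reals Lra Lia List ClassicalEpsilon.
Open Scope R_scope.

(* The finite alphabet U is represented as {0, ..., n-1}. *)
Definition sumU (n : nat) (f : nat -> R) : R :=
  fold_right Rplus 0 (map f (seq 0 n)).

Definition logb (d : nat) (x : R) : R := ln x / ln (INR d).

(* ceiling: ceil x = - floor (- x), floor y = up y - 1 *)
Definition ceilR (x : R) : Z := (1 - up (- x))%Z.

Definition is_dary_code (d n : nat) (c : nat -> list nat) : Prop :=
  forall u, (u < n)%nat -> forall s, In s (c u) -> (s < d)%nat.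

Definition uniquely_decodable (n : nat) (c : nat -> list nat) : Prop :=
  forall xs ys : list nat,
    Forall (fun u => (u < n)%nat) xs -> Forall (fun u => (u < n)%nat) ys ->
    concat (map c xs) = concat (map c ys) -> xs = ys.

Definition KL (n : nat) (P Q : nat -> R) : R :=
  sumU n (fun u => P u * ln (P u / Q u)).

Definition Jeff (n : nat) (P Q : nat -> R) : R :=
  (KL n P Q + KL n Q P) / 2.

Definition c_dl (n d : nat) (l : nat -> nat) : R :=
  sumU n (fun u => / (INR d ^ l u)).

Definition Q_dl (n d : nat) (l : nat -> nat) (u : nat) : R :=
  (/ (INR d ^ l u)) / c_dl n d l.

Definition redundancy (n d : nat) (P : nat -> R) (l : nat -> nat) : R :=
  sumU n (fun u => P u * INR (l u)) + sumU n (fun u => P u * logb d (P u)).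

Definition eps_spec (x e : R) : Prop :=
  0 <= e < 1 /\ e * ln ((1 + e) / (1 - e)) = x.

Definition eps_fun (x : R) : R := epsilon (inhabits 0) (eps_spec x).

(* With ρ(u) := ln (P(u) d^l(u)) ≥ 0 (the length condition), ln (P/Q) = ρ + ln c, so
   D(P‖Q) = Δ_d ln d + ln c while D(Q‖P) = - Σ Q ρ - ln c ≤ - ln c; adding gives the
   first bound.
   For the second bound, the log-sum inequality for (a - b) ln (a/b) merges {Q ≤ P} and
   {Q > P} into single atoms; the resulting binary distributions are t apart in total
   variation and have Jeffreys' divergence at least t ln ((1+t)/(1-t)), which is strictly
   increasing on [0,1), whence t ≤ ε(J). *)
From Stdlib Require Import Reals List Lra Lia ClassicalEpsilon Ranalysis5.
From Coquelicot Require Import Coquelicot.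
Open Scope R_scope.

Lemma sumU_0 f : sumU 0 f = 0.
Proof. reflexivity. Qed.

Lemma sumU_S n f : sumU (S n) f = sumU n f + f n.
Proof.
  unfold sumU; rewrite seq_S, map_app, fold_right_app; simpl.
  generalize (map f (seq 0 n)); intros L.
  induction L as [|a L IH]; simpl; [ring | rewrite IH; ring].
Qed.

Lemma sumU_ext n f g :
  (forall u, (u < n)%nat -> f u = g u) -> sumU n f = sumU n g.
Proof.
  induction n as [|n IH]; intros Hfg; [reflexivity|].
  rewrite !sumU_S, IH, Hfg; [reflexivity | lia | intros u Hu; apply Hfg; lia].
Qed.

Lemma sumU_le n f g :
  (forall u, (u < n)%nat -> f u <= g u) -> sumU n f <= sumU n g.
Proof.
  induction n as [|n IH]; intros Hfg; [rewrite !sumU_0; lra|].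
  rewrite !sumU_S; apply Rplus_le_compat; [apply IH; intros|]; apply Hfg; lia.
Qed.

Lemma sumU_plus n f g : sumU n (fun u => f u + g u) = sumU n f + sumU n g.
Proof. induction n as [|n IH]; [rewrite !sumU_0; ring | rewrite !sumU_S, IH; ring]. Qed.

Lemma sumU_scal n k f : sumU n (fun u => k * f u) = k * sumU n f.
Proof. induction n as [|n IH]; [rewrite !sumU_0; ring | rewrite !sumU_S, IH; ring]. Qed.

Lemma sumU_nonneg n f : (forall u, (u < n)%nat -> 0 <= f u) -> 0 <= sumU n f.
Proof.
  induction n as [|n IH]; intros Hf; [rewrite sumU_0; lra|].
  rewrite sumU_S; assert (0 <= f n) by (apply Hf; lia).
  assert (0 <= sumU n f) by (apply IH; intros; apply Hf; lia); lra.
Qed.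

Lemma sumU_pos n f :
  (0 < n)%nat -> (forall u, (u < n)%nat -> 0 < f u) -> 0 < sumU n f.
Proof.
  intros Hn Hf; destruct n as [|n]; [lia|]; rewrite sumU_S.
  assert (0 <= sumU n f) by (apply sumU_nonneg; intros; left; apply Hf; lia).
  assert (0 < f n) by (apply Hf; lia); lra.
Qed.

Definition sumU_sel (n : nat) (s : nat -> bool) (f : nat -> R) : R :=
  sumU n (fun u => if s u then f u else 0).

Lemma sumU_sel_split n s f :
  sumU n f = sumU_sel n s f + sumU_sel n (fun u => negb (s u)) f.
Proof.
  unfold sumU_sel; induction n as [|n IH]; [rewrite !sumU_0; ring|].
  rewrite !sumU_S, IH; destruct (s n); simpl; ring.
Qed.

Lemma sumU_sel_lin n s a b f g :
  sumU_sel n s (fun u => a * f u + b * g u) = a * sumU_sel n s f + b * sumU_sel n s g.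
Proof.
  unfold sumU_sel; induction n as [|n IH]; [rewrite !sumU_0; ring|].
  rewrite !sumU_S, IH; destruct (s n); ring.
Qed.

Lemma sumU_sel_nonneg n s f :
  (forall u, (u < n)%nat -> 0 <= f u) -> 0 <= sumU_sel n s f.
Proof. intros Hf; apply sumU_nonneg; intros u Hu; destruct (s u); auto; lra. Qed.

Lemma sumU_sel_gt0 n s f : (forall u, (u < n)%nat -> 0 < f u) ->
  0 < sumU_sel n s f <-> exists u, (u < n)%nat /\ s u = true.
Proof.
  unfold sumU_sel; induction n as [|n IH]; intros Hf.
  { rewrite sumU_0; split; [lra | intros [u [Hu _]]; lia]. }
  rewrite sumU_S.
  assert (Hle : 0 <= sumU n (fun u => if s u then f u else 0))
    by (apply (sumU_sel_nonneg n s f); intros; left; apply Hf; lia).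
  assert (IHn := IH (fun u Hu => Hf u ltac:(lia))).
  assert (Hfn : 0 < f n) by (apply Hf; lia).
  destruct (s n) eqn:Hsn; split.
  - intros _; exists n; auto.
  - intros _; lra.
  - intros Hpos; destruct (proj1 IHn ltac:(lra)) as [u [Hu Hsu]]; exists u; split; auto.
  - intros [u [Hu Hsu]].
    assert (u <> n) by (intros ->; congruence).
    enough (0 < sumU n (fun u => if s u then f u else 0)) by lra.
    apply IHn; exists u; split; auto; lia.
Qed.

Definition ge_at (P Q : nat -> R) (u : nat) : bool :=
  if Rle_dec (Q u) (P u) then true else false.

Lemma sumU_Rabs_sub n P Q :
  sumU n (fun u => Rabs (P u - Q u)) =
  (sumU_sel n (ge_at P Q) P - sumU_sel n (ge_at P Q) Q)
  + (sumU_sel n (fun u => negb (ge_at P Q u)) Q - sumU_sel n (fun u => negb (ge_at P Q u)) P).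
Proof.
  unfold sumU_sel; induction n as [|n IH]; [rewrite !sumU_0; ring|].
  rewrite !sumU_S, IH; unfold ge_at; destruct (Rle_dec (Q n) (P n)); simpl.
  - rewrite Rabs_right by lra; ring.
  - rewrite Rabs_left by lra; ring.
Qed.

Lemma ln_le_sub_1 y : 0 < y -> ln y <= y - 1.
Proof. intros Hy; pose proof (exp_ineq1_le (ln y)); rewrite exp_ln in H; lra. Qed.

Lemma jeffreys_term_nonneg a b : 0 < a -> 0 < b -> 0 <= (a - b) * ln (a / b).
Proof.
  intros Ha Hb; rewrite ln_div by lra.
  destruct (Rle_or_lt a b) as [Hab|Hab].
  - assert (ln a <= ln b) by (apply ln_le; lra); nra.
  - assert (ln b <= ln a) by (apply ln_le; lra); nra.
Qed.

(* (a,b) ↦ (a - b) ln (a/b) is convex and positively homogeneous, so it dominates the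
   linear form given by its gradient at any point (a0,b0). *)
Lemma jeffreys_term_ge_tangent a b a0 b0 :
  0 < a -> 0 < b -> 0 < a0 -> 0 < b0 ->
  (ln (a0 / b0) + 1 - b0 / a0) * a + (- ln (a0 / b0) + 1 - a0 / b0) * b
  <= (a - b) * ln (a / b).
Proof.
  intros Ha Hb Ha0 Hb0.
  set (t := (a / b) / (a0 / b0)).
  assert (Ht : 0 < t) by (unfold t; repeat apply Rdiv_lt_0_compat; lra).
  assert (Hlnt : ln t = ln (a / b) - ln (a0 / b0))
    by (unfold t; rewrite ln_div; auto; apply Rdiv_lt_0_compat; lra).
  assert (Hup : b * ln t <= a * (b0 / a0) - b).
  { replace (a * (b0 / a0) - b) with (b * (t - 1)) by (unfold t; field; lra).
    apply Rmult_le_compat_l; [lra | apply ln_le_sub_1; auto]. }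
  assert (Hlo : - (a * ln t) <= b * (a0 / b0) - a).
  { rewrite Ropp_mult_distr_r, <- ln_Rinv by auto.
    replace (b * (a0 / b0) - a) with (a * (/ t - 1)) by (unfold t; field; lra).
    apply Rmult_le_compat_l; [lra | apply ln_le_sub_1, Rinv_0_lt_compat; auto]. }
  rewrite Hlnt in Hup, Hlo; nra.
Qed.

Lemma sumU_sel_jeffreys_ge n s P Q :
  (forall u, (u < n)%nat -> 0 < P u) -> (forall u, (u < n)%nat -> 0 < Q u) ->
  0 < sumU_sel n s P -> 0 < sumU_sel n s Q ->
  (sumU_sel n s P - sumU_sel n s Q) * ln (sumU_sel n s P / sumU_sel n s Q)
  <= sumU_sel n s (fun u => (P u - Q u) * ln (P u / Q u)).
Proof.
  intros HP HQ Hp Hq.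
  set (p := sumU_sel n s P) in *; set (q := sumU_sel n s Q) in *.
  apply Rle_trans with (sumU_sel n s (fun u =>
    (ln (p / q) + 1 - q / p) * P u + (- ln (p / q) + 1 - p / q) * Q u)).
  - rewrite sumU_sel_lin; fold p q; apply Req_le; field; lra.
  - apply sumU_le; intros u Hu; destruct (s u); [|lra].
    apply jeffreys_term_ge_tangent; auto.
Qed.

Lemma Jeff_sumU n P Q :
  (forall u, (u < n)%nat -> 0 < P u) -> (forall u, (u < n)%nat -> 0 < Q u) ->
  2 * Jeff n P Q = sumU n (fun u => (P u - Q u) * ln (P u / Q u)).
Proof.
  intros HP HQ; unfold Jeff, KL.
  replace (2 * ((_ + _) / 2)) with
    (sumU n (fun u => P u * ln (P u / Q u)) + sumU n (fun u => Q u * ln (Q u / P u)))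
    by field.
  rewrite <- sumU_plus; apply sumU_ext; intros u Hu.
  specialize (HP u Hu); specialize (HQ u Hu); rewrite !ln_div by lra; ring.
Qed.

Lemma ln_odds_ratio_ge p q : 0 < q -> q < p -> p < 1 ->
  2 * ln ((1 + (p - q)) / (1 - (p - q))) <= ln (p / q) - ln ((1 - p) / (1 - q)).
Proof.
  intros Hq Hqp Hp.
  set (r := (1 + (p - q)) / (1 - (p - q))).
  assert (Hr : 0 < r) by (apply Rdiv_lt_0_compat; lra).
  rewrite <- ln_div by (apply Rdiv_lt_0_compat; lra).
  replace (2 * ln r) with (ln (r * r)) by (rewrite ln_mult; auto; ring).
  apply ln_le; [nra|].
  assert (Hgap : p / q / ((1 - p) / (1 - q)) - r * r
                 = (p - q) * (2 * q - 1 + (p - q)) ^ 2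
                   / (q * (1 - p) * (1 - (p - q)) ^ 2))
    by (unfold r; field; lra).
  assert (0 <= (p - q) * (2 * q - 1 + (p - q)) ^ 2 / (q * (1 - p) * (1 - (p - q)) ^ 2)).
  { apply Rdiv_le_0_compat; [apply Rmult_le_pos; [lra | apply pow2_ge_0]|].
    apply Rmult_lt_0_compat; [nra | apply pow_lt; lra]. }
  lra.
Qed.

Definition eps_inv (e : R) : R := e * ln ((1 + e) / (1 - e)).

Lemma ln_odds_nonneg e : 0 <= e < 1 -> 0 <= ln ((1 + e) / (1 - e)).
Proof.
  intros He; rewrite <- ln_1; apply ln_le; [lra|].
  apply Rle_div_r; lra.
Qed.

Lemma eps_inv_nonneg e : 0 <= e < 1 -> 0 <= eps_inv e.
Proof. intros He; unfold eps_inv; apply Rmult_le_pos; [lra | apply ln_odds_nonneg; auto]. Qed.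

Lemma eps_inv_lt a b : 0 <= a -> a < b -> b < 1 -> eps_inv a < eps_inv b.
Proof.
  intros Ha Hab Hb; unfold eps_inv.
  assert (Hratio : (1 + a) / (1 - a) < (1 + b) / (1 - b)).
  { assert (Hgap : (1 + b) / (1 - b) - (1 + a) / (1 - a) = 2 * (b - a) / ((1 - a) * (1 - b)))
      by (field; lra).
    assert (0 < 2 * (b - a) / ((1 - a) * (1 - b))) by (apply Rdiv_lt_0_compat; nra).
    lra. }
  assert (Hln : ln ((1 + a) / (1 - a)) < ln ((1 + b) / (1 - b)))
    by (apply ln_increasing; [apply Rdiv_lt_0_compat|]; lra).
  assert (0 <= ln ((1 + a) / (1 - a))) by (apply ln_odds_nonneg; lra).
  nra.
Qed.

Lemma eps_spec_exists x : 0 <= x -> exists e, eps_spec x e.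
Proof.
  intros Hx; destruct (Req_dec x 0) as [->|Hx0].
  { exists 0; split; [lra | ring]. }
  set (E := exp (2 * (x + 1))); set (e1 := (E - 1) / (E + 1)).
  assert (HE : 3 <= E) by (pose proof (exp_ineq1_le (2 * (x + 1))); unfold E; lra).
  assert (He1 : 1 / 2 <= e1 < 1).
  { assert (e1 - 1 / 2 = (E - 3) / (2 * (E + 1)) /\ 1 - e1 = 2 / (E + 1)) as [H1 H2]
      by (unfold e1; split; field; lra).
    assert (0 <= (E - 3) / (2 * (E + 1))) by (apply Rdiv_le_0_compat; lra).
    assert (0 < 2 / (E + 1)) by (apply Rdiv_lt_0_compat; lra).
    lra. }
  assert (Hodds : (1 + e1) / (1 - e1) = E) by (unfold e1; field; lra).
  assert (Hcont : forall e, 0 <= e <= e1 -> continuity_pt (fun e => eps_inv e - x) e).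
  { intros e He; apply continuity_pt_filterlim.
    apply (ex_derive_continuous (fun e => e * ln ((1 + e) / (1 - e)) - x)).
    auto_derive; repeat split; try lra; apply Rdiv_lt_0_compat; lra. }
  destruct (IVT_interv (fun e => eps_inv e - x) 0 e1) as [z [Hz Hfz]];
    [exact Hcont | lra | unfold eps_inv; rewrite Rmult_0_l; lra | |].
  - unfold eps_inv; rewrite Hodds; unfold E; rewrite ln_exp; nra.
  - exists z; split; [lra|]; unfold eps_inv in Hfz; lra.
Qed.

Lemma le_eps_fun x t : 0 <= t < 1 -> eps_inv t <= x -> t <= eps_fun x.
Proof.
  intros Ht Htx.
  assert (Hx : 0 <= x) by (pose proof (eps_inv_nonneg t Ht); lra).
  destruct (epsilon_spec (inhabits 0) (eps_spec x) (eps_spec_exists x Hx)) as [He Hfe].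
  fold (eps_fun x) in He, Hfe.
  destruct (Rle_or_lt t (eps_fun x)) as [|Hlt]; auto.
  pose proof (eps_inv_lt (eps_fun x) t ltac:(lra) Hlt ltac:(lra)); unfold eps_inv in *; lra.
Qed.

Lemma Jeff_ge_eps_inv n P Q :
  (forall u, (u < n)%nat -> 0 < P u) -> (forall u, (u < n)%nat -> 0 < Q u) ->
  sumU n P = 1 -> sumU n Q = 1 ->
  0 <= sumU n (fun u => Rabs (P u - Q u)) / 2 < 1 /\
  eps_inv (sumU n (fun u => Rabs (P u - Q u)) / 2) <= Jeff n P Q.
Proof.
  intros HP HQ HP1 HQ1.
  set (s := ge_at P Q); set (s' := fun u => negb (s u)).
  set (p := sumU_sel n s P); set (q := sumU_sel n s Q).
  set (p' := sumU_sel n s' P); set (q' := sumU_sel n s' Q).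
  assert (Hp1 : p + p' = 1) by (rewrite <- HP1; symmetry; apply sumU_sel_split).
  assert (Hq1 : q + q' = 1) by (rewrite <- HQ1; symmetry; apply sumU_sel_split).
  rewrite sumU_Rabs_sub; fold s s' p q p' q'.
  replace ((p - q + (q' - p')) / 2) with (p - q) by lra.
  assert (Hqp : q <= p).
  { apply sumU_le; intros u Hu; unfold s, ge_at; destruct (Rle_dec (Q u) (P u)); lra. }
  assert (Hq0 : 0 <= q) by (apply sumU_sel_nonneg; intros; left; auto).
  assert (Hp'0 : 0 <= p') by (apply sumU_sel_nonneg; intros; left; auto).
  assert (HJ : 2 * Jeff n P Q
               = sumU_sel n s (fun u => (P u - Q u) * ln (P u / Q u))
                 + sumU_sel n s' (fun u => (P u - Q u) * ln (P u / Q u)))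
    by (rewrite Jeff_sumU; auto; apply sumU_sel_split).
  destruct (Req_dec p q) as [Epq|Hpq].
  - rewrite Epq, Rminus_diag; unfold eps_inv; rewrite Rmult_0_l; split; [lra|].
    assert (0 <= 2 * Jeff n P Q); [|lra].
    rewrite Jeff_sumU by auto; apply sumU_nonneg; intros; apply jeffreys_term_nonneg; auto.
  - assert (Hq : 0 < q) by (apply (sumU_sel_gt0 n s Q HQ), (sumU_sel_gt0 n s P HP); fold p; lra).
    assert (Hp' : 0 < p')
      by (apply (sumU_sel_gt0 n s' P HP), (sumU_sel_gt0 n s' Q HQ); fold q'; lra).
    assert (Hbin := ln_odds_ratio_ge p q Hq ltac:(lra) ltac:(lra)).
    assert (Hblock := sumU_sel_jeffreys_ge n s P Q HP HQ ltac:(fold p; lra) Hq).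
    assert (Hblock' := sumU_sel_jeffreys_ge n s' P Q HP HQ Hp' ltac:(fold q'; lra)).
    fold p q in Hblock; fold p' q' in Hblock'.
    replace p' with (1 - p) in Hblock' by lra; replace q' with (1 - q) in Hblock' by lra.
    split; [lra|]; unfold eps_inv.
    assert (Hmul := Rmult_le_compat_l (p - q) _ _ ltac:(lra) Hbin).
    lra.
Qed.

Lemma ceilR_ge y : y <= IZR (ceilR y).
Proof. unfold ceilR; rewrite minus_IZR; destruct (archimed (- y)); simpl; lra. Qed.

Lemma c_dl_pos n d l : (0 < n)%nat -> 0 < INR d -> 0 < c_dl n d l.
Proof.
  intros Hn Hd; apply sumU_pos; auto; intros u _; apply Rinv_0_lt_compat, pow_lt; auto.
Qed.

Lemma Q_dl_pos n d l u : (0 < n)%nat -> 0 < INR d -> 0 < Q_dl n d l u.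
Proof.
  intros Hn Hd; apply Rdiv_lt_0_compat; [apply Rinv_0_lt_compat, pow_lt; auto|].
  apply c_dl_pos; auto.
Qed.

Lemma sumU_Q_dl n d l : (0 < n)%nat -> 0 < INR d -> sumU n (Q_dl n d l) = 1.
Proof.
  intros Hn Hd; pose proof (c_dl_pos n d l Hn Hd).
  unfold Q_dl, Rdiv; rewrite (sumU_ext n _ (fun u => / c_dl n d l * / INR d ^ l u))
    by (intros; ring).
  rewrite sumU_scal; fold (c_dl n d l); field; lra.
Qed.

(* The excess of l(u) over the ideal length log_d (1/P(u)), measured in nats. *)
Definition redundancy_at (d : nat) (P : nat -> R) (l : nat -> nat) (u : nat) : R :=
  ln (P u) + INR (l u) * ln (INR d).

Lemma redundancy_at_nonneg d P l u : 1 < INR d -> 0 < P u ->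
  (ceilR (logb d (/ P u)) <= Z.of_nat (l u))%Z -> 0 <= redundancy_at d P l u.
Proof.
  intros Hd HPu Hl.
  assert (Hlnd : 0 < ln (INR d)) by (rewrite <- ln_1; apply ln_increasing; lra).
  assert (Hlog : logb d (/ P u) <= INR (l u)).
  { apply Rle_trans with (1 := ceilR_ge _); rewrite INR_IZR_INZ; apply IZR_le; auto. }
  unfold logb in Hlog; rewrite ln_Rinv in Hlog by auto.
  apply Rle_div_l in Hlog; auto; unfold redundancy_at; lra.
Qed.

Lemma redundancy_scaled n d P l : 1 < INR d ->
  redundancy n d P l * ln (INR d) = sumU n (fun u => P u * redundancy_at d P l u).
Proof.
  intros Hd; assert (0 < ln (INR d)) by (rewrite <- ln_1; apply ln_increasing; lra).
  unfold redundancy, logb; rewrite Rmult_plus_distr_r, <- !(Rmult_comm (ln (INR d))).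
  rewrite <- !sumU_scal, <- sumU_plus; apply sumU_ext; intros u _.
  unfold redundancy_at; field; lra.
Qed.

Section CodeDistribution.

Variables (n d : nat) (P : nat -> R) (l : nat -> nat).
Hypotheses (Hn : (0 < n)%nat) (Hd : 1 < INR d)
  (HP : forall u, (u < n)%nat -> 0 < P u) (HP1 : sumU n P = 1).

Let Q := Q_dl n d l.
Let c := c_dl n d l.
Let rho := redundancy_at d P l.

Let Hc : 0 < c. Proof. apply c_dl_pos; auto; lra. Qed.
Let HQ u : 0 < Q u. Proof. apply Q_dl_pos; auto; lra. Qed.

Lemma ln_div_Q_dl u : (u < n)%nat -> ln (P u / Q u) = rho u + ln c.
Proof.
  intros Hu; pose proof (HP u Hu); pose proof (pow_lt (INR d) (l u) ltac:(lra)).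
  unfold Q, Q_dl; fold c.
  replace (P u / (/ INR d ^ l u / c)) with (P u * (INR d ^ l u * c)) by (field; lra).
  rewrite !ln_mult, ln_pow by (try apply Rmult_lt_0_compat; auto; lra).
  unfold rho, redundancy_at; ring.
Qed.

Lemma KL_P_Q_dl : KL n P Q = sumU n (fun u => P u * rho u) + ln c.
Proof.
  unfold KL; rewrite (sumU_ext n _ (fun u => P u * rho u + ln c * P u)).
  - rewrite sumU_plus, sumU_scal, HP1; ring.
  - intros u Hu; rewrite ln_div_Q_dl by auto; ring.
Qed.

Lemma KL_Q_dl_P_le : (forall u, (u < n)%nat -> 0 <= rho u) -> KL n Q P <= - ln c.
Proof.
  intros Hrho; unfold KL.
  replace (- ln c) with (sumU n (fun u => - ln c * Q u))
    by (rewrite sumU_scal; unfold Q; rewrite sumU_Q_dl by (auto; lra); ring).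
  apply sumU_le; intros u Hu.
  assert (Hinv : ln (Q u / P u) = - (rho u + ln c)).
  { rewrite <- ln_div_Q_dl, <- ln_Rinv by (auto; apply Rdiv_lt_0_compat; auto).
    f_equal; pose proof (HP u Hu); pose proof (HQ u); field; lra. }
  rewrite Hinv; pose proof (Hrho u Hu); pose proof (HQ u); nra.
Qed.

Lemma Jeff_Q_dl_le : (forall u, (u < n)%nat -> 0 <= rho u) ->
  Jeff n P Q <= redundancy n d P l * ln (INR d) / 2.
Proof.
  intros Hrho; unfold Jeff; rewrite redundancy_scaled, KL_P_Q_dl by auto.
  pose proof KL_Q_dl_P_le Hrho; unfold rho in *; lra.
Qed.

End CodeDistribution.

Theorem mainTheorem8 (n d : nat) (P : nat -> R) (c : nat -> list nat) (l : nat -> nat)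
  (Hd : (2 <= d)%nat)
  (HPpos : forall u, (u < n)%nat -> 0 < P u)
  (HPsum : sumU n P = 1)
  (Hcode : is_dary_code d n c)
  (HUD : uniquely_decodable n c)
  (Hlen : forall u, (u < n)%nat -> length (c u) = l u)
  (Hl : forall u, (u < n)%nat -> (ceilR (logb d (/ P u)) <= Z.of_nat (l u))%Z) :
  Jeff n P (Q_dl n d l) <= redundancy n d P l * ln (INR d) / 2 /\
  sumU n (fun u => Rabs (P u - Q_dl n d l u))
    <= 2 * eps_fun (redundancy n d P l * ln (INR d) / 2).
Proof.
  assert (Hd1 : 1 < INR d) by (apply lt_1_INR; lia).
  assert (Hn : (0 < n)%nat) by (destruct n; [rewrite sumU_0 in HPsum; lra | lia]).
  assert (HJ : Jeff n P (Q_dl n d l) <= redundancy n d P l * ln (INR d) / 2).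
  { apply Jeff_Q_dl_le; auto; intros u Hu; apply redundancy_at_nonneg; auto. }
  split; [exact HJ|].
  destruct (Jeff_ge_eps_inv n P (Q_dl n d l)) as [Ht HJt]; auto.
  - intros; apply Q_dl_pos; auto; lra.
  - apply sumU_Q_dl; auto; lra.
  - pose proof (le_eps_fun _ _ Ht (Rle_trans _ _ _ HJt HJ)); lra.
Qed.
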